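(* Let $n\ge 3$ and $0\le k\le n-3$, and let $G$ be a connected graph of order $n$ with exactly $k$ pendent vertices. Then $$SO(G)\le \frac{(n-k-2)(n-k-1)^2}{\sqrt2}+k\sqrt{(n-1)^2+1}+(n-k-1)\sqrt{(n-1)^2+(n-k-1)^2},$$ with equality if and only if $G$ is isomorphic to the graph obtained by attaching $k$ pendent edges to one vertex of the complete graph $K_{n-k}$.
   Context: For a graph $G$, $d_G(w)$ denotes the degree of vertex $w$, and the Sombor index is $SO(G)=\sum_{ab\in E(G)}\sqrt{d_G(a)^2+d_G(b)^2}$. A pendent vertex is a vertex of degree one. $K_m$ denotes the complete graph on $m$ vertices. *)

From mathcomp Require Import all_boot all_order all_algebra.
Set Implicit Arguments. Unset Strict Implicit. Unset Printing Implicit Defensive.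
Import Order.TTheory GRing.Theory Num.Theory.

Definition simple_graph (n : nat) (e : rel 'I_n) : Prop :=
  symmetric e /\ irreflexive e.

Definition connected_graph (n : nat) (e : rel 'I_n) : Prop :=
  forall x y : 'I_n, connect e x y.

Definition deg (n : nat) (e : rel 'I_n) (x : 'I_n) : nat := #|[set y | e x y]|.

Definition num_pendent (n : nat) (e : rel 'I_n) : nat :=
  #|[set x | deg e x == 1%N]|.

Definition sombor (R : rcfType) (n : nat) (e : rel 'I_n) : R :=
  \sum_(a : 'I_n) \sum_(b : 'I_n | ((a < b)%N && e a b))
     Num.sqrt (((deg e a) ^ 2 + (deg e b) ^ 2)%N%:R).

(* K_{n-k} on vertices 0..n-k-1 with k pendent edges attached to vertex 0;
   the pendent vertices are n-k..n-1. *)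
Definition kite (n k : nat) : rel 'I_n :=
  fun x y => (x != y) &&
    [|| ((x < n - k)%N && (y < n - k)%N),
        ((val x == 0%N) && (n - k <= y)%N) |
        ((val y == 0%N) && (n - k <= x)%N)].

Definition isomorphic (n : nat) (e1 e2 : rel 'I_n) : Prop :=
  exists f : 'I_n -> 'I_n, bijective f /\ forall x y, e1 x y = e2 (f x) (f y).
Arguments kite n k : clear implicits.

(* Let Q be the non-pendent ("core") vertices, D = |Q| - 1, and npend a the
   number of pendent neighbours of a in Q, so that deg a <= D + npend a.
   Splitting 2 SO(G) into ordered core pairs and pendent edges, monotonicity
   and submodularity of sw(a, b) = sqrt(a^2 + b^2) bound a core pair by
   sw(D, D) + gain(npend a) + gain(npend b), which gives
   2 SO(G) <= |Q| D sw(D, D) + 2 sum_{a in Q} load(npend a).  An exchange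
   (convexity) inequality makes load superadditive, strictly for two positive
   arguments, so the sum is at most load(k).  Equality forces a core clique
   with all pendent vertices on one hub, i.e. the kite. *)

From mathcomp Require Import all_boot all_order all_algebra.
From mathcomp Require Import ring lra zify.
Import Order.TTheory GRing.Theory Num.Theory.
Local Open Scope ring_scope.
Set Implicit Arguments. Unset Strict Implicit. Unset Printing Implicit Defensive.

Section Hypot.
Variable R : rcfType.
Implicit Types x y : R.

Definition hypot x y : R := Num.sqrt (x ^+ 2 + y ^+ 2).

Lemma hypot_ge0 x y : 0 <= hypot x y.
Proof. exact: sqrtr_ge0. Qed.

Lemma hypotC x y : hypot x y = hypot y x.
Proof. by rewrite /hypot addrC. Qed.

Lemma ler_sqrt_add (a b c d : R) : 0 <= a -> 0 <= b -> 0 <= c -> 0 <= d ->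
  a + b + 2 * Num.sqrt (a * b) <= c + d + 2 * Num.sqrt (c * d) ->
  Num.sqrt a + Num.sqrt b <= Num.sqrt c + Num.sqrt d.
Proof.
move=> a0 b0 c0 d0 h.
rewrite -ler_sqr ?nnegrE ?addr_ge0 ?sqrtr_ge0 // !sqrrD !sqr_sqrtr // -!sqrtrM //.
by rewrite !mulr2n; lra.
Qed.

Lemma ler_sqr_nneg x y : 0 <= x <= y -> x ^+ 2 <= y ^+ 2.
Proof. by move=> /andP[x0 xy]; rewrite ler_sqr ?nnegrE // (le_trans x0). Qed.

Lemma hypot_submodular (u0 u v0 v : R) : 0 <= u0 <= u -> 0 <= v0 <= v ->
  hypot u v + hypot u0 v0 <= hypot u v0 + hypot u0 v.
Proof.
move=> /ler_sqr_nneg su /ler_sqr_nneg sv.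
have sq0 (z : R) : 0 <= z ^+ 2 by exact: sqr_ge0.
apply: ler_sqrt_add; rewrite ?addr_ge0 //.
have -> : u ^+ 2 + v0 ^+ 2 + (u0 ^+ 2 + v ^+ 2) = u ^+ 2 + v ^+ 2 + (u0 ^+ 2 + v0 ^+ 2) by ring.
rewrite lerD2l ler_wpM2l // ler_sqrt ?mulr_ge0 ?addr_ge0 // -subr_ge0.
have -> : (u ^+ 2 + v0 ^+ 2) * (u0 ^+ 2 + v ^+ 2) - (u ^+ 2 + v ^+ 2) * (u0 ^+ 2 + v0 ^+ 2)
  = (u ^+ 2 - u0 ^+ 2) * (v ^+ 2 - v0 ^+ 2) by ring.
by rewrite mulr_ge0 // subr_ge0.
Qed.

Lemma ler_sqrtl (a y : R) : 0 <= y -> a <= y ^+ 2 -> Num.sqrt a <= y.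
Proof. by move=> y0 h; rewrite -(ger0_norm y0) -sqrtr_sqr ler_wsqrtr. Qed.

(* Exchange inequality for the convex map x |-> hypot x c: for p <= q, r,
   replacing the pair (q, r) by (p, q + r - p), same sum but more spread
   out, does not decrease the total. *)
Lemma hypot_exchange (c p q r : R) : 0 <= p -> p <= q -> p <= r ->
  hypot q c + hypot r c <= hypot p c + hypot (q + r - p) c.
Proof.
move=> p0 pq pr; set s := q + r - p.
have sq0 (z : R) : 0 <= z ^+ 2 by exact: sqr_ge0.
set A := q ^+ 2 + c ^+ 2; set B := r ^+ 2 + c ^+ 2.
set C := p ^+ 2 + c ^+ 2; set E := s ^+ 2 + c ^+ 2.
have CE0 : 0 <= C * E by rewrite mulr_ge0 ?addr_ge0.
set d := q * r - p * s; set S := Num.sqrt (C * E).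
have d0 : 0 <= d by rewrite /d /s (_ : _ - _ = (q - p) * (r - p)) ?mulr_ge0 ?subr_ge0 //; ring.
have ps0 : 0 <= p * s by rewrite mulr_ge0 // /s; lra.
have S2 : S ^+ 2 = C * E by rewrite sqr_sqrtr.
have psS : p * s <= S.
  rewrite -(ger0_norm ps0) -sqrtr_sqr ler_wsqrtr // -subr_ge0.
  have -> : C * E - (p * s) ^+ 2 = c ^+ 2 * (p ^+ 2 + s ^+ 2) + (c ^+ 2) ^+ 2.
    by rewrite /C /E; ring.
  by apply: addr_ge0; rewrite // mulr_ge0 ?addr_ge0.
have key : Num.sqrt (A * B) <= d + S.
  apply: ler_sqrtl; first by rewrite addr_ge0 ?sqrtr_ge0.
  have -> : (d + S) ^+ 2 = A * B + 2 * (d * S - d * (p * s)) + 2 * (c ^+ 2 * d).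
    by rewrite sqrrD S2 /A /B /C /E /d /s; ring.
  rewrite -addrA lerDl; apply: addr_ge0; apply: mulr_ge0 => //.
    by rewrite subr_ge0 ler_wpM2l.
  by rewrite mulr_ge0.
apply: ler_sqrt_add; rewrite ?addr_ge0 // -/A -/B -/C -/E -/S.
have -> : C + E = A + B + 2 * d by rewrite /A /B /C /E /d /s; ring.
lra.
Qed.
End Hypot.

Section EdgeWeights.
Variable R : rcfType.
Implicit Types a b s t x y D : nat.

Definition sw a b : R := hypot a%:R b%:R.

Lemma sw_sqrt a b : Num.sqrt ((a ^ 2 + b ^ 2)%N%:R) = sw a b.
Proof. by rewrite /sw /hypot natrD !natrX. Qed.

Lemma sw_ge0 a b : 0 <= sw a b.
Proof. exact: hypot_ge0. Qed.

Lemma swC a b : sw a b = sw b a.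
Proof. exact: hypotC. Qed.

Lemma sw_le a b a' b' : (a <= a')%N -> (b <= b')%N -> sw a b <= sw a' b'.
Proof.
move=> aa bb; rewrite -!sw_sqrt ler_sqrt ?ler0n // ler_nat.
by rewrite leq_add ?leq_exp2r.
Qed.

Lemma sw_ltl a b a' : (a < a')%N -> sw a b < sw a' b.
Proof.
move=> aa; rewrite -!sw_sqrt ltr_sqrt ?ltr0n ?addn_gt0 ?expn_gt0 ?(leq_ltn_trans _ aa) //.
by rewrite ltr_nat ltn_add2r ltn_exp2r.
Qed.

(* Increase of the weight of an edge of K_{D+1} when one end receives x
   further neighbours. *)
Definition gain D x : R := sw (D + x) D - sw D D.

Lemma gain_ge0 D x : 0 <= gain D x.
Proof. by rewrite subr_ge0 sw_le ?leq_addr. Qed.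

Lemma gain0 D : gain D 0 = 0.
Proof. by rewrite /gain addn0 subrr. Qed.

Lemma gain_superadditive D x y : gain D x + gain D y <= gain D (x + y).
Proof.
have := @hypot_exchange R D%:R D%:R (D + x)%:R (D + y)%:R.
rewrite ler0n !ler_nat !leq_addr -!natrD => /(_ isT isT isT).
rewrite (_ : _ - _ = (D + (x + y))%:R); last by rewrite !natrD; ring.
by rewrite /gain /sw; lra.
Qed.

Lemma sw_core_le D s t : sw (D + s) (D + t) <= sw D D + gain D s + gain D t.
Proof.
have := @hypot_submodular R D%:R (D + s)%:R D%:R (D + t)%:R.
rewrite ler0n !ler_nat !leq_addr [hypot D%:R (D + t)%:R]hypotC => /(_ isT isT).
by rewrite /gain /sw; lra.
Qed.

Lemma sw_core_eq D s t : (s == 0)%N || (t == 0)%N ->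
  sw (D + s) (D + t) = sw D D + gain D s + gain D t.
Proof.
by case/orP=> /eqP ->; rewrite gain0 addn0 /gain ?(swC D (D + t)); ring.
Qed.

(* The increase of the Sombor index of K_{D+1} caused by attaching x
   pendent edges to one of its vertices. *)
Definition load D x : R := D%:R * gain D x + x%:R * sw (D + x) 1.

Lemma load0 D : load D 0 = 0.
Proof. by rewrite /load gain0 mulr0 mul0r addr0. Qed.

(* load is superadditive, and strictly so for two positive arguments: it is
   better to attach all pendent edges to a single vertex. *)
Lemma load_superadditive D x y : load D x + load D y <= load D (x + y).
Proof.
have hg : D%:R * (gain D x + gain D y) <= D%:R * gain D (x + y).
  by rewrite ler_wpM2l ?gain_superadditive.
have hx : x%:R * sw (D + x) 1 <= x%:R * sw (D + (x + y)) 1.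
  by rewrite ler_wpM2l ?sw_le ?leq_add2l ?leq_addr.
have hy : y%:R * sw (D + y) 1 <= y%:R * sw (D + (x + y)) 1.
  by rewrite ler_wpM2l ?sw_le ?leq_add2l ?leq_addl.
rewrite /load natrD mulrDl; lra.
Qed.

Lemma load_strict D x y : (0 < x)%N -> (0 < y)%N -> load D x + load D y < load D (x + y).
Proof.
move=> x0 y0.
have hg : D%:R * (gain D x + gain D y) <= D%:R * gain D (x + y).
  by rewrite ler_wpM2l ?gain_superadditive.
have hx : x%:R * sw (D + x) 1 < x%:R * sw (D + (x + y)) 1.
  by rewrite ltr_pM2l ?ltr0n ?sw_ltl // ltn_add2l -[ltnLHS]addn0 ltn_add2l.
have hy : y%:R * sw (D + y) 1 <= y%:R * sw (D + (x + y)) 1.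
  by rewrite ler_wpM2l ?sw_le ?leq_add2l ?leq_addl.
rewrite /load natrD mulrDl; lra.
Qed.

Lemma load_sum D (I : finType) (P : pred I) (x : I -> nat) :
  \sum_(i | P i) load D (x i) <= load D (\sum_(i | P i) x i)%N.
Proof.
elim/big_ind2: _ => [|u1 y1 u2 y2 h1 h2|//]; first by rewrite load0.
exact: le_trans (lerD h1 h2) (load_superadditive _ _ _).
Qed.

Lemma load_sum_eqP D (I : finType) (A : {set I}) (x : I -> nat) :
  \sum_(i in A) load D (x i) = load D (\sum_(i in A) x i)%N <->
  (forall i j, i \in A -> j \in A -> i != j -> x i = 0%N \/ x j = 0%N).
Proof.
split=> [heq i j iA jA ij | hx].
  case: (posnP (x i)) => [|xi]; [by left | right].
  apply/eqP; rewrite -leqn0 leqNgt; apply/negP => xj.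
  have rest : (0 < \sum_(l in A | l != i) x l)%N.
    by rewrite (bigD1 j) /= ?jA 1?eq_sym // addn_gt0 xj.
  have := load_sum D (fun l => (l \in A) && (l != i)) x.
  have := load_strict D xi rest.
  by move: heq; rewrite (bigD1 i) //= [in RHS](bigD1 i) //=; lra.
case: (pickP (fun i => (i \in A) && (0 < x i)%N)) => [i /andP[iA xi] | none].
  have x0 l : l \in A -> l != i -> x l = 0%N.
    by move=> lA li; case: (hx i l iA lA); rewrite 1?eq_sym // => xi0; rewrite xi0 in xi.
  rewrite (bigD1 i) //= [in RHS](bigD1 i) //= !big1 ?addr0 ?addn0 //.
    by move=> l /andP[lA li]; rewrite x0.
  by move=> l /andP[lA li]; rewrite x0 ?load0.
have x0 l : l \in A -> x l = 0%N by move=> lA; have := none l; rewrite lA /= lt0n => /negbFE/eqP.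
by rewrite !big1 ?load0 // => l /x0 ->; rewrite load0.
Qed.
End EdgeWeights.

Lemma card_setI_sum (T : finType) (A B : {set T}) :
  #|A :&: B| = (\sum_(i in B) (i \in A))%N.
Proof.
rewrite -sum1_card (eq_bigl (fun i => (i \in B) && (i \in A))) => [|i]; last first.
  by rewrite inE andbC.
by rewrite big_mkcondr; apply: eq_bigr => i _; case: (i \in A).
Qed.

Section PendentStructure.
Variables (n : nat) (e : rel 'I_n).
Hypothesis e_simple : simple_graph e.

Definition nbhd x := [set y | e x y].
Definition pendent := [set x | deg e x == 1%N].
Definition core := ~: pendent.
Definition npend q := #|nbhd q :&: pendent|.

Lemma card_core : #|core| = (n - #|pendent|)%N.
Proof. by rewrite cardsCs setCK card_ord. Qed.

Lemma deg_core_split q : deg e q = (#|nbhd q :&: core| + npend q)%N.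
Proof. by rewrite /deg /npend -(cardsID core) setDE /core setCK. Qed.

Lemma core_nbhd_le a : a \in core -> (#|nbhd a :&: core| <= #|core| - 1)%N.
Proof.
move=> aQ; rewrite (cardsD1 a core) aQ add1n subn1 /=.
apply/subset_leq_card/subsetP => b; rewrite !inE => /andP[eab ->].
by rewrite andbT; apply: contraTneq eab => ->; rewrite e_simple.2.
Qed.

Lemma deg_core_le a : a \in core -> (deg e a <= #|core| - 1 + npend a)%N.
Proof. by move=> aQ; rewrite deg_core_split leq_add2r core_nbhd_le. Qed.

Definition core_clique := forall a b, a \in core -> b \in core -> a != b -> e a b.

Lemma deg_core_clique : core_clique ->
  forall a, a \in core -> deg e a = (#|core| - 1 + npend a)%N.
Proof.
move=> clq a aQ; rewrite deg_core_split; congr (_ + _)%N.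
apply/eqP; rewrite eqn_leq core_nbhd_le //= (cardsD1 a core) aQ add1n subn1 /=.
apply/subset_leq_card/subsetP => b; rewrite !inE => /andP[ba bQ].
by rewrite bQ clq // ?inE // eq_sym.
Qed.

Definition kite_shape := core_clique /\
  forall a b, a \in core -> b \in core -> a != b -> npend a = 0%N \/ npend b = 0%N.

Hypothesis e_conn : connected_graph e.
Hypothesis n_ge3 : (3 <= n)%N.

(* In a connected graph on at least three vertices, a pendent vertex is
   attached to a core vertex (two adjacent pendent vertices would form a
   whole connected component). *)
Lemma pendent_nbhd p : p \in pendent -> exists2 h, nbhd p = [set h] & h \in core.
Proof.
rewrite inE => /cards1P[h hN]; exists h => //.
rewrite !inE; apply/negP => /cards1P[h' hN'].
have nbP y : e p y = (y == h) by rewrite -in_set1 -hN inE.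
have nbH y : e h y = (y == h') by rewrite -in_set1 -hN' inE.
have h'p : h' = p by apply/eqP; rewrite eq_sym -nbH e_simple.1 nbP.
rewrite {}h'p in nbH.
pose S := [set p; h].
have S_closed u v : e u v -> u \in S -> v \in S.
  move=> euv; rewrite !inE => /orP[] /eqP uE; move: euv; rewrite uE ?nbP ?nbH => /eqP ->.
    by rewrite eqxx orbT.
  by rewrite eqxx.
have clS : closed e S.
  by move=> x y exy; apply/idP/idP; apply: S_closed; rewrite // e_simple.1.
have allS : [set: 'I_n] \subset S.
  by apply/subsetP => z _; rewrite -(closed_connect clS (e_conn p z)) !inE eqxx.
have := subset_leq_card allS; rewrite cardsT card_ord cards2.
by case: (p != h) => /=; apply/negP; rewrite -ltnNge (leq_trans _ n_ge3).
Qed.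

Lemma pendent_nonadj p p' : p \in pendent -> p' \in pendent -> e p p' = false.
Proof.
move=> pP p'P; have [h hN hQ] := pendent_nbhd pP.
apply/negP => epp'; have : p' \in nbhd p by rewrite inE.
by rewrite hN inE => /eqP p'h; move: hQ; rewrite -p'h inE p'P.
Qed.

Lemma sum_npend : (\sum_(q in core) npend q)%N = #|pendent|.
Proof.
under eq_bigr => q _ do rewrite /npend card_setI_sum.
rewrite exchange_big /= -sum1_card; apply: eq_bigr => p pP.
have [h hN hQ] := pendent_nbhd pP.
rewrite (eq_bigr (fun q => nat_of_bool (q \in nbhd p))) => [|q _]; last by rewrite !inE e_simple.1.
by rewrite -card_setI_sum hN (setIidPl _) ?cards1 // sub1set.
Qed.
End PendentStructure.

Section SomborSplit.
Variables (R : rcfType) (n : nat) (e : rel 'I_n).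
Hypothesis e_simple : simple_graph e.

Definition arcw a b : R := if e a b then sw R (deg e a) (deg e b) else 0.

Lemma arcwC a b : arcw a b = arcw b a.
Proof. by rewrite /arcw e_simple.1 swC. Qed.

Lemma sombor_double : 2 * sombor R e = \sum_a \sum_b arcw a b.
Proof.
pose half (lt : 'I_n -> 'I_n -> bool) := \sum_a \sum_b (if lt a b then arcw a b else 0).
have somborE : sombor R e = half (fun a b => (a < b)%N).
  apply: eq_bigr => a _; rewrite big_mkcond; apply: eq_bigr => b _.
  by rewrite /arcw sw_sqrt; case: (a < b)%N; case: (e a b).
have swap : half (fun a b => (b < a)%N) = half (fun a b => (a < b)%N).
  by rewrite /half exchange_big; apply: eq_bigr => a _; apply: eq_bigr => b _; rewrite arcwC.
have split : \sum_a \sum_b arcw a b = half (fun a b => (a < b)%N) + half (fun a b => (b < a)%N).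
  rewrite -big_split; apply: eq_bigr => a _; rewrite -big_split; apply: eq_bigr => b _ /=.
  case: ltngtP => [||/val_inj ->]; rewrite ?addr0 ?add0r //.
  by rewrite /arcw e_simple.2.
by rewrite split swap somborE; lra.
Qed.

Lemma sum_core_pendent (G : 'I_n -> R) :
  \sum_a G a = \sum_(a in core e) G a + \sum_(a in pendent e) G a.
Proof.
rewrite (bigID [in core e]) /=; congr (_ + _).
by apply: eq_bigl => a; rewrite !inE negbK.
Qed.

Lemma pendent_row a : a \in core e ->
  \sum_(b in pendent e) arcw a b = (npend e a)%:R * sw R (deg e a) 1.
Proof.
move=> aQ; rewrite (eq_bigr (fun b => if b \in nbhd e a then sw R (deg e a) 1 else 0)).
  rewrite -big_mkcondr mulr_natl /npend -sumr_const.
  by apply: eq_bigl => b; rewrite !inE andbC.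
by move=> b; rewrite inE => /eqP db; rewrite /arcw db inE.
Qed.

Hypotheses (e_conn : connected_graph e) (n_ge3 : (3 <= n)%N).

Lemma sombor_split : \sum_a \sum_b arcw a b =
  \sum_(a in core e) \sum_(b in core e) arcw a b
  + 2 * \sum_(a in core e) (npend e a)%:R * sw R (deg e a) 1.
Proof.
have pp : \sum_(a in pendent e) \sum_(b in pendent e) arcw a b = 0.
  apply: big1 => a aP; apply: big1 => b bP.
  by rewrite /arcw (pendent_nonadj e_simple e_conn n_ge3 aP bP).
have pq : \sum_(a in pendent e) \sum_(b in core e) arcw a b =
          \sum_(a in core e) \sum_(b in pendent e) arcw a b.
  by rewrite exchange_big; apply: eq_bigr => a _; apply: eq_bigr => b _; rewrite arcwC.
rewrite sum_core_pendent.
under eq_bigr => a _ do rewrite sum_core_pendent.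
rewrite big_split /=.
under [X in _ + X]eq_bigr => a _ do rewrite sum_core_pendent.
rewrite big_split /= pp pq (eq_bigr _ pendent_row); lra.
Qed.
End SomborSplit.

Lemma pair_sum (R : rcfType) (T : finType) (Q : {set T}) (c : R) (g : T -> R) :
  (0 < #|Q|)%N ->
  \sum_(a in Q) \sum_(b in Q) (if b == a then 0 else c + g a + g b)
  = (#|Q| * (#|Q| - 1))%:R * c + 2 * (#|Q| - 1)%:R * \sum_(a in Q) g a.
Proof.
move=> Q0; set G := \sum_(a in Q) g a.
have row a : a \in Q ->
   \sum_(b in Q) (if b == a then 0 else c + g a + g b) = (c + g a) * #|Q|%:R + G - (c + g a + g a).
  move=> aQ; rewrite (bigD1 a) //= eqxx add0r.
  have -> : (c + g a) * #|Q|%:R + G = \sum_(b in Q) (c + g a + g b).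
    by rewrite big_split /= sumr_const mulr_natr.
  rewrite [in RHS](bigD1 a) //= addrAC subrr add0r.
  by apply: eq_bigr => b /andP[_ /negbTE ->].
rewrite (eq_bigr _ row).
rewrite (eq_bigr (fun a => (c * #|Q|%:R + G - c) + (#|Q|%:R - 2) * g a)) => [|a _]; last by ring.
by rewrite big_split /= sumr_const -mulr_sumr -/G natrM natrB // -mulr_natr; ring.
Qed.

Lemma sum_le_eq (R : rcfType) (I : finType) (P : pred I) (F G : I -> R) :
  (forall i, P i -> F i <= G i) -> \sum_(i | P i) F i = \sum_(i | P i) G i ->
  forall i, P i -> F i = G i.
Proof.
move=> FG sumFG i Pi; apply/eqP; rewrite eq_sym -subr_eq0; apply/eqP.
apply: (@psumr_eq0P _ _ P (fun j => G j - F j)) Pi => [j Pj|]; first by rewrite subr_ge0 FG.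
by rewrite sumrB sumFG subrr.
Qed.

Section SomborBound.
Variables (R : rcfType) (n : nat) (e : rel 'I_n).
Hypothesis e_simple : simple_graph e.

Local Notation Q := (core e).
Local Notation D := (#|core e| - 1)%N.

Definition pair_bound a b : R :=
  if b == a then 0 else sw R D D + gain R D (npend e a) + gain R D (npend e b).

Lemma sw_le_pair_bound x y : sw R D D <= sw R D D + gain R D x + gain R D y.
Proof. by rewrite -addrA lerDl; apply: addr_ge0; exact: gain_ge0. Qed.

(* A pair of core vertices weighs at most its bound, since degrees only grow
   towards D + npend. *)
Lemma arcw_le_bound a b : a \in Q -> b \in Q -> arcw R e a b <= pair_bound a b.
Proof.
move=> aQ bQ; rewrite /pair_bound /arcw; case: eqP => [->|_]; first by rewrite e_simple.2.
case: ifP => _; last exact: le_trans (sw_ge0 _ _ _) (sw_le_pair_bound _ _).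
by apply: le_trans (sw_core_le _ _ _ _); apply: sw_le; apply: deg_core_le.
Qed.

Lemma pendent_edges_le a : a \in Q ->
  (npend e a)%:R * sw R (deg e a) 1 <= (npend e a)%:R * sw R (D + npend e a) 1.
Proof. by move=> aQ; rewrite ler_wpM2l // sw_le // deg_core_le. Qed.

(* If all core pairs meet their bound, the core is a clique: a missing edge
   weighs 0 while its bound is at least sw D D > 0. *)
Lemma pair_bound_tight_clique :
  \sum_(a in Q) \sum_(b in Q) arcw R e a b = \sum_(a in Q) \sum_(b in Q) pair_bound a b ->
  core_clique e.
Proof.
move=> tight a b aQ bQ ab.
have row_le a' : a' \in Q -> \sum_(b' in Q) arcw R e a' b' <= \sum_(b' in Q) pair_bound a' b'.
  by move=> a'Q; apply: ler_sum => b' b'Q; apply: arcw_le_bound.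
have row_eq := sum_le_eq row_le tight aQ.
have := sum_le_eq (fun b' (b'Q : b' \in Q) => arcw_le_bound aQ b'Q) row_eq bQ.
rewrite /arcw /pair_bound eq_sym (negbTE ab); case: ifP => // _ missing_eq.
have D0 : (0 < D)%N by rewrite subn_gt0; apply/card_gt1P; exists a, b.
have := le_lt_trans (sw_ge0 R 0 D) (sw_ltl R D D0).
by move=> /lt_le_trans/(_ (sw_le_pair_bound (npend e a) (npend e b))); rewrite -missing_eq ltxx.
Qed.

Lemma kite_shape_tight : kite_shape e ->
  \sum_(a in Q) \sum_(b in Q) arcw R e a b = \sum_(a in Q) \sum_(b in Q) pair_bound a b /\
  \sum_(a in Q) (npend e a)%:R * sw R (deg e a) 1 =
  \sum_(a in Q) (npend e a)%:R * sw R (D + npend e a) 1.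
Proof.
case=> clq one; have degE := deg_core_clique e_simple clq.
split; apply: eq_bigr => a aQ; last by rewrite degE.
apply: eq_bigr => b bQ; rewrite /arcw /pair_bound; case: eqP => [->|/eqP ba].
  by rewrite e_simple.2.
rewrite clq // 1?eq_sym // !degE //; apply: sw_core_eq.
by case: (one a b aQ bQ); rewrite 1?eq_sym // => ->; rewrite eqxx ?orbT.
Qed.

Hypotheses (e_conn : connected_graph e) (n_ge3 : (3 <= n)%N).

Lemma sombor_bound : (0 < #|Q|)%N ->
  2 * sombor R e <= (#|Q| * D)%:R * sw R D D + 2 * load R D #|pendent e| /\
  (2 * sombor R e = (#|Q| * D)%:R * sw R D D + 2 * load R D #|pendent e| <-> kite_shape e).
Proof.
move=> Q0.
set T1 := \sum_(a in Q) \sum_(b in Q) arcw R e a b.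
set U1 := \sum_(a in Q) \sum_(b in Q) pair_bound a b.
set T2 := \sum_(a in Q) (npend e a)%:R * sw R (deg e a) 1.
set U2 := \sum_(a in Q) (npend e a)%:R * sw R (D + npend e a) 1.
set L := \sum_(a in Q) load R D (npend e a).
have somborE : 2 * sombor R e = T1 + 2 * T2 by rewrite sombor_double // sombor_split.
have T1U1 : T1 <= U1 by apply: ler_sum => a aQ; apply: ler_sum => b bQ; apply: arcw_le_bound.
have T2U2 : T2 <= U2 by apply: ler_sum => a aQ; apply: pendent_edges_le.
have UE : U1 + 2 * U2 = (#|Q| * D)%:R * sw R D D + 2 * L.
  rewrite /L /load big_split /= -mulr_sumr /U1 /pair_bound.
  by rewrite (pair_sum _ (fun a => gain R D (npend e a))) // -/U2; ring.
have L_eqP := load_sum_eqP R D Q (npend e); rewrite sum_npend // in L_eqP.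
have L_le : L <= load R D #|pendent e| by rewrite -(sum_npend e_simple e_conn n_ge3) load_sum.
split; first lra.
split => [tight | shape].
  have T1_tight : T1 = U1 by lra.
  have L_tight : L = load R D #|pendent e| by lra.
  by split; [exact: pair_bound_tight_clique | exact/L_eqP].
have [T1_tight T2_tight] := kite_shape_tight shape.
have L_tight : L = load R D #|pendent e| by exact/L_eqP/shape.2.
rewrite -/T1 -/T2 -/U1 -/U2 in T1_tight T2_tight; lra.
Qed.
End SomborBound.

Lemma ord_relabel n (C : {set 'I_n}) (h : 'I_n) : h \in C ->
  exists f : 'I_n -> 'I_n, [/\ injective f,
    forall x, (val (f x) == 0%N) = (x == h) &
    forall x, (f x < #|C|)%N = (x \in C)].
Proof.
move=> hC; set L := h :: enum (C :\ h) ++ enum (~: C).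
have memL x : x \in L.
  by rewrite inE mem_cat !mem_enum !inE; case: (x == h); case: (x \in C).
have sizeL : size L = n.
  by rewrite /= size_cat -!cardE -[in RHS](card_ord n) -(cardsC C) (cardsD1 h C) hC.
have ltn x : (index x L < n)%N by rewrite -[n in (_ < n)%N]sizeL index_mem.
exists (fun x => Ordinal (ltn x)); split=> [x y /(congr1 val) eq_idx | x | x] /=.
- by rewrite -(nth_index h (memL x)) [index x L]eq_idx nth_index.
- by rewrite [x == h]eq_sym; case: (h == x).
have cardCh : #|C| = (#|C :\ h|).+1 by rewrite (cardsD1 h C) hC.
rewrite eq_sym; case: eqP => [-> //|/eqP hx]; first by rewrite cardCh.
rewrite index_cat mem_enum in_setD1 hx /= cardCh ltnS.
case: ifP => xC; first by rewrite cardE index_mem mem_enum in_setD1 hx.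
by rewrite cardE ltnNge leq_addr.
Qed.

Section KiteShape.
Variables (n : nat) (e : rel 'I_n).
Hypotheses (e_simple : simple_graph e) (e_conn : connected_graph e) (n_ge3 : (3 <= n)%N).

Lemma kite_shape_hub : kite_shape e -> (0 < #|core e|)%N ->
  exists2 h, h \in core e & forall a, a \in core e -> a != h -> npend e a = 0%N.
Proof.
move=> [_ one] Q0.
case: (pickP [pred a | (a \in core e) && (0 < npend e a)%N]) => [h /andP[hQ h0] | none].
  exists h => // a aQ ah.
  by case: (one h a hQ aQ); rewrite 1?eq_sym // => hz; rewrite hz in h0.
case/card_gt0P: Q0 => h hQ; exists h => // a aQ _.
by apply/eqP; rewrite -leqn0 leqNgt; apply/negP => a0; have := none a; rewrite /= aQ a0.
Qed.

Variable h : 'I_n.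
Hypotheses (hQ : h \in core e) (hub : forall a, a \in core e -> a != h -> npend e a = 0%N).

Lemma pendent_hub p y : p \in pendent e -> e p y = (y == h).
Proof.
move=> pP; have [h' hN h'Q] := pendent_nbhd e_simple e_conn n_ge3 pP.
suff <- : h' = h by rewrite -in_set1 -hN inE.
apply/eqP; apply: contraT => h'h.
have pin : p \in nbhd e h' :&: pendent e.
  have : h' \in nbhd e p by rewrite hN set11.
  by rewrite !inE in pP *; rewrite e_simple.1 pP andbT.
have /eqP := hub h'Q h'h; rewrite cards_eq0 => /eqP empty.
by rewrite empty inE in pin.
Qed.

Lemma kite_shape_edges : kite_shape e -> forall x y, e x y = (x != y) &&
  [|| (x \in core e) && (y \in core e), (x == h) && (y \notin core e) |
      (y == h) && (x \notin core e)].
Proof.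
move=> [clq _] x y.
have pend z : z \notin core e -> z \in pendent e by rewrite inE negbK.
have not_hub z : z \notin core e -> (z == h) = false by apply: contraNF => /eqP ->.
case: (boolP (x \in core e)) => xQ; case: (boolP (y \in core e)) => yQ /=.
- rewrite andbT; case: eqVneq => [<-|]; [exact: e_simple.2 | exact: clq].
- have -> : x != y by apply: contraNneq yQ => <-.
  by rewrite e_simple.1 pendent_hub ?pend // (not_hub y) // andbF orbF andbT.
- have -> : x != y by apply: contraNneq xQ => ->.
  by rewrite pendent_hub ?pend // (not_hub x) // andbF andbT.
- by rewrite pendent_hub ?pend // (not_hub x) // (not_hub y) // andbF.
Qed.
End KiteShape.

Lemma deg_iso n (e e' : rel 'I_n) (f : 'I_n -> 'I_n) : bijective f ->
  (forall x y, e x y = e' (f x) (f y)) -> forall x, deg e x = deg e' (f x).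
Proof.
move=> [g fK gK] fE x; rewrite /deg -(card_imset _ (can_inj fK)).
by apply: eq_card => y; rewrite (can2_imset_pre _ fK gK) !inE fE gK.
Qed.

Lemma kite_deg1 n k (z : 'I_n) : (3 <= n - k)%N -> (deg (kite n k) z == 1%N) = (n - k <= z)%N.
Proof.
move=> nk; have n3 : (3 <= n)%N by apply: leq_trans nk (leq_subr _ _).
pose o i (lt_i3 : (i < 3)%N) : 'I_n := Ordinal (leq_trans lt_i3 n3).
case: leqP => zk.
  have z0 : (val z == 0%N) = false.
    by apply/negbTE; rewrite -lt0n (leq_trans _ zk) // (leq_trans _ nk).
  apply/cards1P; exists (o 0%N isT); apply/setP => y; rewrite !inE /kite ltnNge zk z0 /= andbT.
  case: (eqVneq y (o 0%N isT)) => [-> /= | ne]; rewrite ?andbT.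
    by apply/eqP => zo; move: z0; rewrite zo.
  have y0 : val y != 0%N by apply: contraNneq ne => y0; apply/eqP/val_inj.
  by rewrite (negbTE y0) andbF.
have nb (y : 'I_n) : val y != val z -> (y < n - k)%N -> y \in [set y | kite n k z y].
  by move=> yz yk; rewrite inE /kite zk yk /= andbT; apply: contraNneq yz => ->.
have ok i (lt_i3 : (i < 3)%N) : (o i lt_i3 < n - k)%N by apply: leq_trans lt_i3 nk.
apply/negbTE; rewrite neq_ltn; apply/orP; right; apply/card_gt1P.
have [z0 | z0] := eqVneq (val z) 0%N.
  by exists (o 1%N isT), (o 2%N isT); split; rewrite ?nb ?ok // z0.
exists (o 0%N isT); have [z1 | z1] := eqVneq (val z) 1%N.
  by exists (o 2%N isT); split; rewrite ?nb ?ok // ?z1 // eq_sym.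
by exists (o 1%N isT); split; rewrite ?nb ?ok // eq_sym.
Qed.

Lemma iso_kite_shape n k (e : rel 'I_n) : (3 <= n - k)%N ->
  isomorphic e (kite n k) -> kite_shape e.
Proof.
move=> nk [f [fbij fE]]; have finj := bij_inj fbij.
have coreE x : (x \in core e) = (f x < n - k)%N.
  by rewrite !inE (deg_iso fbij fE) kite_deg1 // -ltnNge.
have no_pend a : a \in core e -> val (f a) != 0%N -> npend e a = 0%N.
  move=> aQ fa0; apply/eqP; rewrite cards_eq0; apply/eqP/setP => p; rewrite !inE.
  apply/negbTE/negP => /andP[eap p1].
  have pk : (n - k <= f p)%N by rewrite -kite_deg1 // -(deg_iso fbij fE).
  move: eap; rewrite fE /kite -coreE aQ (negbTE fa0) ltnNge pk /=.
  by rewrite leqNgt -coreE aQ !andbF.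
split=> [a b aQ bQ ab | a b aQ bQ ab].
  by rewrite fE /kite (inj_eq finj) ab -!coreE aQ bQ.
have [fa0 | fa0] := eqVneq (val (f a)) 0%N; [right | left]; apply: no_pend => //.
by rewrite -fa0 (inj_eq val_inj) (inj_eq finj) eq_sym.
Qed.

Lemma kite_shape_iso n k (e : rel 'I_n) : simple_graph e -> connected_graph e -> (3 <= n)%N ->
  #|pendent e| = k -> (0 < n - k)%N -> kite_shape e -> isomorphic e (kite n k).
Proof.
move=> e_simple e_conn n_ge3 ek nk shape.
have cardQ : #|core e| = (n - k)%N by rewrite card_core ek.
have Q0 : (0 < #|core e|)%N by rewrite cardQ.
have [h hQ hub] := kite_shape_hub shape Q0.
have [f [finj f0 fQ]] := ord_relabel hQ.
exists f; split=> [|x y]; first exact: injF_bij.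
rewrite (kite_shape_edges e_simple e_conn n_ge3 hQ hub shape) /kite (inj_eq finj).
by rewrite [(n - k <= f x)%N]leqNgt [(n - k <= f y)%N]leqNgt -cardQ !fQ !f0.
Qed.

(* The bound of the theorem, written with D = n - k - 1, is half the bound
   of sombor_bound (sqrt 2 / 2 = 1 / sqrt 2 and sw D D = sqrt 2 * D). *)
Lemma kite_bound_eq (R : rcfType) (D k : nat) : (1 <= D)%N ->
  ((D - 1) * D ^ 2)%N%:R / Num.sqrt 2 + k%:R * Num.sqrt (((D + k) ^ 2 + 1)%N%:R)
  + D%:R * Num.sqrt (((D + k) ^ 2 + D ^ 2)%N%:R)
  = (((D + 1) * D)%N%:R * sw R D D + 2 * load R D k) / 2.
Proof.
move=> D1; set s := Num.sqrt (2 : R).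
have s0 : s != 0 by rewrite sqrtr_eq0 -ltNge ltr0n.
have ss : s * s = 2 by rewrite -expr2 sqr_sqrtr ?ler0n.
have swDD : sw R D D = s * D%:R.
  rewrite /sw /hypot (_ : _ + _ = 2 * D%:R ^+ 2); last by ring.
  by rewrite sqrtrM ?ler0n // sqrtr_sqr ger0_norm.
have sV : s^-1 = s / 2.
  by apply: (mulIf s0); rewrite mulVf // mulrAC ss divff // pnatr_eq0.
have sw1 : Num.sqrt (((D + k) ^ 2 + 1)%N%:R) = sw R (D + k) 1 by rewrite -sw_sqrt.
rewrite /load /gain swDD sw1 sw_sqrt natrM natrB // natrX natrM natrD sV.
by field.
Qed.

Unset Implicit Arguments.

Theorem theorem3p6 (R : rcfType) (n k : nat) (e : rel 'I_n) :
  (3 <= n)%N -> (k <= n - 3)%N ->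
  simple_graph e -> connected_graph e -> num_pendent e = k ->
  sombor R e <=
    ((n - k - 2) * (n - k - 1) ^ 2)%N%:R / Num.sqrt 2
    + (k%:R : R) * Num.sqrt (((n - 1) ^ 2 + 1)%N%:R)
    + (n - k - 1)%N%:R * Num.sqrt (((n - 1) ^ 2 + (n - k - 1) ^ 2)%N%:R)
  /\
  (sombor R e =
    ((n - k - 2) * (n - k - 1) ^ 2)%N%:R / Num.sqrt 2
    + (k%:R : R) * Num.sqrt (((n - 1) ^ 2 + 1)%N%:R)
    + (n - k - 1)%N%:R * Num.sqrt (((n - 1) ^ 2 + (n - k - 1) ^ 2)%N%:R)
   <-> isomorphic e (kite n k)).
Proof.
move=> n_ge3 kn e_simple e_conn ek; have pk : #|pendent e| = k := ek.
have nk : (3 <= n - k)%N by lia.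
have cardQ : #|core e| = (n - k)%N by rewrite card_core pk.
have Q0 : (0 < #|core e|)%N by rewrite cardQ; lia.
have [le eqv] := sombor_bound R e_simple e_conn n_ge3 Q0.
rewrite cardQ pk in le eqv.
have -> : (n - k - 2)%N = (n - k - 1 - 1)%N by lia.
have -> : (n - 1)%N = (n - k - 1 + k)%N by lia.
rewrite kite_bound_eq; last by lia.
have -> : (n - k - 1 + 1)%N = (n - k)%N by lia.
set B := (_ + _) in le eqv *.
split; first lra.
split=> [tight | /(iso_kite_shape nk)/eqv]; last lra.
by apply: kite_shape_iso => //; [exact: leq_trans nk | apply/eqv; lra].
Qed.
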